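(* Let $Z\in\mathbb R^{n\times d}$ ($d\ge n$) with $ZZ^\top$ nonsingular, let $\Sigma$ be symmetric with eigenvalues in $[1/\kappa,1]$, $X=Z\Sigma^{1/2}$, $\sigma>0$, and let $\rho\ge0$ satisfy $I-\frac\rho dZ^\top Z\succ0$. Then $$\mathcal P(A(\rho,\Sigma);\Sigma)-\mathcal P(A(0,\Sigma);\Sigma)\ge\frac{\rho^2\sigma^4}{d}\mathrm{Tr}\Big(\big(I-\tfrac\rho dZZ^\top\big)^{-2}\tfrac{ZZ^\top}{d}\big(\tfrac{ZZ^\top}{d}+\sigma^2I\big)^{-1}\Big),$$ $$\mathcal T(A(\rho,\Sigma);\Sigma)-\mathcal T(A(0,\Sigma);\Sigma)\le\frac{\kappa\sigma^4}{n}\mathrm{Tr}\Big(\big((I-\tfrac\rho dZZ^\top)^{-2}-I\big)\big(\tfrac1dZZ^\top+\kappa\sigma^2I\big)^{-1}\Big).$$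
   Context: $\mathcal P(A;\Sigma):=\frac1d\|\Sigma^{1/2}(AX-I)\|_F^2+\sigma^2\|\Sigma^{1/2}A\|_F^2$, $\mathcal T(A;\Sigma):=\frac1{nd}\|XAX-X\|_F^2+\frac{\sigma^2}{n}\|XA-I\|_F^2$, and $A(\rho,\Sigma):=\big(I-\rho\sigma^2(\Sigma-\frac\rho dX^\top X)^{-1}\big)(X^\top X+d\sigma^2I)^{-1}X^\top$, defined when $\Sigma-\frac\rho dX^\top X\succ0$ (equivalently $I-\frac\rho dZ^\top Z\succ0$). *)

From HB Require Import structures.
From mathcomp Require Import all_boot all_order all_algebra.
From mathcomp Require Import reals.
Set Implicit Arguments. Unset Strict Implicit. Unset Printing Implicit Defensive.
Import Order.TTheory GRing.Theory Num.Theory.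
Local Open Scope ring_scope.

Definition frob2 {R : realType} (m n : nat) (M : 'M[R]_(m, n)) : R :=
  \sum_(i < m) \sum_(j < n) M i j ^+ 2.

Definition psd {R : realType} (n : nat) (M : 'M[R]_n) : Prop :=
  M^T = M /\ forall v : 'rV[R]_n, 0 <= (v *m M *m v^T) 0 0.
Definition posdef {R : realType} (n : nat) (M : 'M[R]_n) : Prop :=
  M^T = M /\ forall v : 'rV[R]_n, v != 0 -> 0 < (v *m M *m v^T) 0 0.

Definition is_sqrtm {R : realType} (n : nat) (S Sigma : 'M[R]_n) : Prop :=
  psd S /\ S *m S = Sigma.

(* P(A; Sigma), with Sh = Sigma^{1/2}, X = Z Sigma^{1/2} *)
Definition Pcal {R : realType} (n d : nat) (Z : 'M[R]_(n, d)) (Sh : 'M[R]_d)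
    (sigma : R) (A : 'M[R]_(d, n)) : R :=
  let X := Z *m Sh in
  (d%:R)^-1 * frob2 (Sh *m (A *m X - 1%:M)) + sigma ^+ 2 * frob2 (Sh *m A).

Definition Tcal {R : realType} (n d : nat) (Z : 'M[R]_(n, d)) (Sh : 'M[R]_d)
    (sigma : R) (A : 'M[R]_(d, n)) : R :=
  let X := Z *m Sh in
  (n%:R * d%:R)^-1 * frob2 (X *m A *m X - X)
  + sigma ^+ 2 / n%:R * frob2 (X *m A - 1%:M).

Definition Aopt {R : realType} (n d : nat) (Z : 'M[R]_(n, d)) (Sigma Sh : 'M[R]_d)
    (sigma rho : R) : 'M[R]_(d, n) :=
  let X := Z *m Sh in
  (1%:M - (rho * sigma ^+ 2) *: invmx (Sigma - (rho / d%:R) *: (X^T *m X)))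
    *m invmx (X^T *m X + (d%:R * sigma ^+ 2)%:M) *m X^T.

From HB Require Import structures.
From mathcomp Require Import all_boot all_order all_algebra.
From mathcomp Require Import reals.
From mathcomp Require Import complex sesquilinear spectral ring.
Set Implicit Arguments. Unset Strict Implicit. Unset Printing Implicit Defensive.
Import Order.TTheory GRing.Theory Num.Theory.
Local Open Scope ring_scope.

(* Write X = Z Sh, c = d sigma^2, H = X X^T + c I, W = Z Z^T / d and
   M = (I - rho W)^-1.  Both estimators are explicit: A(0) = X^T H^-1 is the
   minimiser of the quadratic P, and A(rho) = A(0) - rho sigma^2 Sh^-1 Z^T M H^-1.
   Hence the excess P-risk is rho^2 sigma^4 / d tr(M Z Z^T M H^-1), while
   X A(rho) - I = -c M H^-1 and X A(0) - I = -c H^-1 make the excess T-risk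
   d sigma^4 / n tr((M^2 - I) H^-1).  The eigenvalue bounds on Sigma give
   kappa^-1 Z Z^T <= X X^T = Z Sigma Z^T <= Z Z^T in the Loewner order, and
   matrix inversion is antitone, so H^-1 can be replaced by the inverses in
   the two bounds, against the PSD weights M Z Z^T M and M^2 - I. *)

Section InverseAlgebra.
Variable R : comUnitRingType.

Lemma invmxM n (A B : 'M[R]_n) : A \in unitmx -> B \in unitmx ->
  invmx (A *m B) = invmx B *m invmx A.
Proof.
move=> uA uB; have uAB : A *m B \in unitmx by rewrite unitmx_mul uA uB.
have h : invmx B *m invmx A *m (A *m B) = 1%:M by rewrite !mulmxA mulmxKV // mulVmx.
by rewrite -[invmx (A *m B)]mul1mx -h mulmxK.
Qed.

Lemma invmx_intertwine m n (P : 'M[R]_m) (Q : 'M[R]_n) (A : 'M[R]_(n, m)) :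
  P \in unitmx -> Q \in unitmx -> A *m P = Q *m A -> invmx Q *m A = A *m invmx P.
Proof.
move=> uP uQ eA.
by rewrite -[LHS](mulmxK uP) -(mulmxA (invmx Q)) eA mulmxA mulVmx // mul1mx.
Qed.

Lemma mxtrace_scaled_invmx_quad m n a (B : 'M[R]_(m, n)) (H : 'M[R]_n) :
  H^T = H -> H \in unitmx ->
  \tr ((a *: B) *m invmx H *m H *m ((a *: B) *m invmx H)^T) =
  a ^+ 2 * \tr (B^T *m B *m invmx H).
Proof.
move=> sH uH; rewrite mulmxKV // trmx_mul trmx_inv sH mulmxA mxtrace_mulC mulmxA.
rewrite [(a *: B)^T]linearZ /= -(scalemxAl a B^T) -scalemxAr -!(scalemxAl a).
by rewrite !mxtraceZ mulrA -expr2.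
Qed.

End InverseAlgebra.

Section Psd.
Variable R : realType.

Lemma mul_row_trE n (u : 'rV[R]_n) : (u *m u^T) 0 0 = \sum_j u 0 j ^+ 2.
Proof. by rewrite !mxE; apply: eq_bigr => j _; rewrite !mxE expr2. Qed.

Lemma mul_row_tr_ge0 n (u : 'rV[R]_n) : 0 <= (u *m u^T) 0 0.
Proof. by rewrite mul_row_trE sumr_ge0 // => j _; rewrite sqr_ge0. Qed.

Lemma mul_row_tr_eq0 n (u : 'rV[R]_n) : (u *m u^T) 0 0 = 0 -> u = 0.
Proof.
rewrite mul_row_trE => /eqP; rewrite psumr_eq0 => [/allP u0|j _]; last exact: sqr_ge0.
apply/rowP => j; rewrite mxE; apply/eqP; rewrite -sqrf_eq0.
exact: (implyP (u0 j (mem_index_enum j))).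
Qed.

Lemma psd_mul_tr m n (G : 'M[R]_(m, n)) : psd (G *m G^T).
Proof.
split; first by rewrite trmx_mul trmxK.
by move=> v; rewrite mulmxA -(trmxK v) -mulmxA -trmx_mul trmxK mul_row_tr_ge0.
Qed.

Lemma psd_congr m n (B : 'M[R]_(m, n)) (C : 'M[R]_n) : psd C -> psd (B *m C *m B^T).
Proof.
case=> sC pC; split; first by rewrite !trmx_mul trmxK sC mulmxA.
by move=> v; rewrite !mulmxA -(mulmxA _ B^T) -trmx_mul pC.
Qed.

Lemma psdD n (A B : 'M[R]_n) : psd A -> psd B -> psd (A + B).
Proof.
case=> sA pA [sB pB]; split; first by rewrite linearD /= sA sB.
by move=> v; rewrite mulmxDr mulmxDl mxE addr_ge0.
Qed.

Lemma psdZ n a (A : 'M[R]_n) : 0 <= a -> psd A -> psd (a *: A).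
Proof.
move=> a0 [sA pA]; split; first by rewrite linearZ /= sA.
by move=> v; rewrite -scalemxAr -scalemxAl mxE mulr_ge0.
Qed.

Lemma psd_scalar_mx n a : 0 <= a -> psd (a%:M : 'M[R]_n).
Proof.
move=> a0; split=> [|v]; first exact: tr_scalar_mx.
by rewrite mul_mx_scalar -scalemxAl mxE mulr_ge0 ?mul_row_tr_ge0.
Qed.

Lemma psd_eigenvalue_ge0 n (A : 'M[R]_n) a : psd A -> eigenvalue A a -> 0 <= a.
Proof.
case=> _ pA /eigenvalueP [v vA vn0].
have vv_gt0 : 0 < (v *m v^T) 0 0.
  rewrite lt0r mul_row_tr_ge0 andbT.
  by apply: contra vn0 => /eqP/mul_row_tr_eq0 ->.
by have := pA v; rewrite vA -scalemxAl mxE pmulr_lge0.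
Qed.

(* The complex spectral theorem gives A = P^* D P with P unitary and D >= 0
   real diagonal; the real and imaginary parts of P then give a real factor
   with n + n columns. *)
Lemma sym_eigenvalue_ge0_factor n (A : 'M[R]_n) : A^T = A ->
  (forall a, eigenvalue A a -> 0 <= a) ->
  exists G : 'M[R]_(n, n + n), A = G *m G^T.
Proof.
move=> sA eA.
pose toC := real_complex R.
pose Ac := map_mx toC A.
have hA : Ac \is hermsymmx.
  apply/is_hermitianmxP; rewrite expr0 scale1r.
  apply/matrixP => i j; rewrite !mxE.
  have -> : A j i = A i j by rewrite -[in RHS]sA mxE.
  by rewrite conj_Creal //; apply/complex_realP; exists (A i j).
have /orthomx_spectralP Aeq := hermitian_normalmx hA.
set P := spectralmx Ac in Aeq; set D := spectral_diag Ac in Aeq.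
have PU : P \in unitmx := spectral_unit Ac.
pose x k := complex.Re (D 0 k).
have Dx k : D 0 k = toC (x k).
  rewrite /toC /x RRe_real //.
  by move/mxOverP: (hermitian_spectral_diag_real hA); apply.
have x_ge0 k : 0 <= x k.
  apply: eA; rewrite eigenvalue_root_char.
  have : eigenvalue Ac (D 0 k).
    apply/eigenvalueP; exists (row k P).
      have PA : P *m Ac = diag_mx D *m P by rewrite Aeq !mulmxA mulmxV // mul1mx.
      by rewrite -row_mul PA; apply/rowP => j; rewrite mul_diag_mx !mxE.
    apply/eqP => r0; have := congr1 (row k) (mulmxV PU).
    rewrite row_mul r0 mul0mx => /rowP/(_ k); rewrite !mxE eqxx /=.
    by move/eqP; rewrite eq_sym oner_eq0.
  by rewrite Dx eigenvalue_root_char -map_char_poly fmorph_root.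
pose s := \row_k Num.sqrt (x k).
pose Ur := map_mx (@complex.Re R) P; pose Ui := map_mx (@complex.Im R) P.
exists (row_mx (Ur^T *m diag_mx s) (Ui^T *m diag_mx s)).
rewrite tr_row_mx mul_row_col !trmx_mul !tr_diag_mx !trmxK !mulmxA !mul_mx_diag.
apply/matrixP => i j.
have E : toC (A i j) = \sum_k (Num.conj (P k i) * toC (x k)) * P k j.
  have -> : toC (A i j) = Ac i j by rewrite mxE.
  rewrite Aeq invmx_unitary ?spectral_unitarymx // mul_mx_diag !mxE.
  by apply: eq_bigr => k _; rewrite !mxE Dx.
have ReD : {morph (@complex.Re R) : u v / u + v} by move=> [a b] [c e].
have := congr1 (@complex.Re R) E; rewrite (big_morph _ ReD (erefl _)) /= => ->.
rewrite !mxE -big_split /=; apply: eq_bigr => k _.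
have ss : Num.sqrt (x k) * Num.sqrt (x k) = x k by rewrite -expr2 sqr_sqrtr.
rewrite !mxE -[in LHS]ss.
by case: (P k i) => a b; case: (P k j) => c e /=; ring.
Qed.

Lemma psd_factor n (A : 'M[R]_n) : psd A -> exists G : 'M[R]_(n, n + n), A = G *m G^T.
Proof.
move=> pA; apply: sym_eigenvalue_ge0_factor; first by case: pA.
by move=> a; apply: psd_eigenvalue_ge0.
Qed.

Lemma sym_eigenvalue_ge0_psd n (A : 'M[R]_n) : A^T = A ->
  (forall a, eigenvalue A a -> 0 <= a) -> psd A.
Proof.
by move=> sA eA; have [G ->] := sym_eigenvalue_ge0_factor sA eA; apply: psd_mul_tr.
Qed.

Lemma eigenvalue_bounds_psd n (S : 'M[R]_n) lo hi : S^T = S ->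
  (forall a, eigenvalue S a -> lo <= a <= hi) ->
  psd (S - lo%:M) /\ psd (hi%:M - S).
Proof.
move=> sS eS; split; apply: sym_eigenvalue_ge0_psd; rewrite ?linearB /= ?sS ?tr_scalar_mx //.
  move=> b /eigenvalueP [v vA vn0].
  have : eigenvalue S (b + lo).
    apply/eigenvalueP; exists v => //.
    by move: vA; rewrite mulmxBr mul_mx_scalar scalerDl => /eqP; rewrite subr_eq => /eqP.
  by move/eS => /andP[+ _]; rewrite lerDr.
move=> b /eigenvalueP [v vA vn0].
have : eigenvalue S (hi - b).
  apply/eigenvalueP; exists v => //.
  by rewrite scalerBl -vA mulmxBr mul_mx_scalar opprB addrC subrK.
by move/eS => /andP[_]; rewrite gerDl oppr_le0.
Qed.

Lemma mxtrace_psd_ge0 n (P Q : 'M[R]_n) : psd P -> psd Q -> 0 <= \tr (P *m Q).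
Proof.
move=> /psd_factor [G ->] [_ pQ].
rewrite -mulmxA mxtrace_mulC /mxtrace sumr_ge0 // => j _.
have -> : (G^T *m Q *m G) j j = (row j G^T *m Q *m (row j G^T)^T) 0 0.
  by rewrite -!row_mul !mxE; apply: eq_bigr => k _; rewrite !mxE.
exact: pQ.
Qed.

Lemma psd_addc_unit n (P : 'M[R]_n) c : psd P -> 0 < c -> P + c%:M \in unitmx.
Proof.
move=> [_ pP] c0; rewrite -row_free_unit; apply: inj_row_free => v vP0.
have : (v *m (P + c%:M) *m v^T) 0 0 = 0 by rewrite vP0 mul0mx mxE.
rewrite mulmxDr mulmxDl mul_mx_scalar -scalemxAl mxE [X in _ + X]mxE => /eqP.
rewrite paddr_eq0 ?pP ?mulr_ge0 ?mul_row_tr_ge0 ?ltW // mulf_eq0 (gt_eqF c0) /=.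
by case/andP => _ /eqP/mul_row_tr_eq0.
Qed.

Lemma posdef_unit n (K : 'M[R]_n) : posdef K -> K \in unitmx.
Proof.
move=> [_ pK]; rewrite -row_free_unit; apply: inj_row_free => v vK0.
by apply/eqP/negPn/negP => /pK; rewrite vK0 mul0mx mxE ltxx.
Qed.

Lemma posdef_psd n (K : 'M[R]_n) : posdef K -> psd K.
Proof.
move=> [sK pK]; split=> // v; have [->|vn0] := eqVneq v 0.
  by rewrite !mul0mx mxE.
exact/ltW/pK.
Qed.

Lemma psd_invmx n (H : 'M[R]_n) : psd H -> H \in unitmx -> psd (invmx H).
Proof.
move=> pH uH; have [sH _] := pH.
have -> : invmx H = invmx H *m H *m (invmx H)^T by rewrite trmx_inv sH mulVmx // mul1mx.
exact: psd_congr.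
Qed.

(* H^-1 - H'^-1 = H'^-1 (D + D H^-1 D) H'^-1 with D = H' - H. *)
Lemma psd_invmx_antitone n (H H' : 'M[R]_n) : psd H -> H \in unitmx ->
  H' \in unitmx -> psd (H' - H) -> psd (invmx H - invmx H').
Proof.
move=> pH uH + pD.
have [D {}pD ->] : exists2 D, psd D & H' = H + D by exists (H' - H); rewrite // addrC subrK.
move=> uHD; have [sD _] := pD.
have sHD : (H + D)^T = H + D by rewrite linearD /= sD; case: pH => ->.
have eD : D + D *m invmx H *m D = D *m invmx H *m (H + D) by rewrite mulmxDr mulmxKV.
have -> : invmx H - invmx (H + D) =
    invmx (H + D) *m (D + D *m invmx H *m D) *m (invmx (H + D))^T.
  rewrite trmx_inv sHD eD !mulmxA mulmxK //.
  rewrite [X in _ = _ *m X *m _](_ : D = - H + (H + D)); last by rewrite addKr.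
  by rewrite mulmxDr mulmxDl mulVmx // mul1mx mulmxN mulNmx mulmxK // addrC.
apply/psd_congr/psdD => //.
by rewrite -{2}sD; apply/psd_congr/psd_invmx.
Qed.

End Psd.

Section RiskAsTraces.
Variable R : realType.

Lemma frob2E m n (M : 'M[R]_(m, n)) : frob2 M = \tr (M *m M^T).
Proof.
rewrite /frob2 /mxtrace; apply: eq_bigr => i _; rewrite !mxE.
by apply: eq_bigr => j _; rewrite !mxE expr2.
Qed.

Lemma frob2D m n (P Q : 'M[R]_(m, n)) :
  frob2 (P + Q) = frob2 P + 2 * \tr (Q *m P^T) + frob2 Q.
Proof.
rewrite !frob2E linearD /= mulmxDl !mulmxDr !mxtraceD.
by rewrite -[\tr (P *m Q^T)]mxtrace_tr trmx_mul trmxK; ring.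
Qed.

Lemma Pcal_dim0 n (Z : 'M[R]_(n, 0)) Sh sigma A : Pcal Z Sh sigma A = 0.
Proof. by rewrite /Pcal /frob2 !big_ord0 !mulr0 addr0. Qed.

Lemma Tcal_dim0 (Z : 'M[R]_(0, 0)) Sh sigma A : Tcal Z Sh sigma A = 0.
Proof. by rewrite /Tcal /frob2 !big_ord0 !mulr0 addr0. Qed.

Variables (n d : nat) (Z : 'M[R]_(n, d)) (Sh : 'M[R]_d) (sigma : R).
Hypothesis d_gt0 : (0 < d)%N.

Local Notation X := (Z *m Sh).
Local Notation H := (X *m X^T + (d%:R * sigma ^+ 2)%:M).

(* [A0] solves the normal equations of the quadratic [Pcal], so the cross
   term in the expansion around [A0] vanishes. *)
Lemma Pcal_sub_normal (A A0 : 'M[R]_(d, n)) : A0 *m H = X^T ->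
  Pcal Z Sh sigma A - Pcal Z Sh sigma A0 =
  d%:R^-1 * \tr (Sh *m (A - A0) *m H *m (Sh *m (A - A0))^T).
Proof.
move=> hA0; rewrite /Pcal.
set c := d%:R * sigma ^+ 2 in hA0 *; set Y := Sh *m (A - A0).
have eAX : Sh *m (A *m X - 1%:M) = Sh *m (A0 *m X - 1%:M) + Y *m X.
  rewrite /Y -mulmxA -mulmxDr; congr (Sh *m _).
  by rewrite mulmxBl [RHS]addrC [RHS]addrA subrK.
have eA : Sh *m A = Sh *m A0 + Y by rewrite /Y mulmxBr addrC subrK.
have cross : X *m (Sh *m (A0 *m X - 1%:M))^T = - c *: (Sh *m A0)^T.
  apply/eqP; rewrite -subr_eq0 scaleNr opprK !trmx_mul (mulmxA X) scalemxAl -mulmxDl.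
  suff -> : X *m (A0 *m X - 1%:M)^T + c *: A0^T = 0 by rewrite mul0mx.
  have hX : X *m X^T *m A0^T + c *: A0^T = X.
    have := congr1 trmx hA0; rewrite trmxK trmx_mul linearD /= tr_scalar_mx trmx_mul trmxK.
    by rewrite mulmxDl mul_scalar_mx.
  by rewrite linearB /= trmx_mul trmx1 mulmxBr mulmx1 mulmxA addrAC hX subrr.
have trc : \tr (Y *m X *m (Sh *m (A0 *m X - 1%:M))^T) = - c * \tr (Y *m (Sh *m A0)^T).
  by rewrite -mulmxA cross -scalemxAr mxtraceZ.
have trYX : \tr (Y *m X *m (Y *m X)^T) = \tr (Y *m (X *m X^T) *m Y^T).
  by rewrite trmx_mul !mulmxA.
have trYH : \tr (Y *m H *m Y^T) = \tr (Y *m (X *m X^T) *m Y^T) + c * \tr (Y *m Y^T).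
  by rewrite mulmxDr mulmxDl mxtraceD mul_mx_scalar -scalemxAl mxtraceZ.
rewrite eAX eA !frob2D trc !frob2E trYX trYH /c.
have dn0 : d%:R != 0 :> R by rewrite pnatr_eq0 -lt0n.
by field.
Qed.

Lemma Tcal_trE (A : 'M[R]_(d, n)) :
  Tcal Z Sh sigma A = (n%:R * d%:R)^-1 * \tr ((X *m A - 1%:M) *m H *m (X *m A - 1%:M)^T).
Proof.
rewrite /Tcal; set B := X *m A - 1%:M.
have -> : X *m A *m X - X = B *m X by rewrite /B mulmxBl mul1mx.
rewrite !frob2E.
have -> : \tr (B *m X *m (B *m X)^T) = \tr (B *m (X *m X^T) *m B^T).
  by rewrite trmx_mul !mulmxA.
rewrite mulmxDr mulmxDl mxtraceD mul_mx_scalar -scalemxAl mxtraceZ.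
have dn0 : d%:R != 0 :> R by rewrite pnatr_eq0 -lt0n.
by rewrite invfM; set u := n%:R^-1; field.
Qed.

End RiskAsTraces.

Section RidgeModel.
Variables (R : realType) (n d : nat) (Z : 'M[R]_(n, d)) (Sigma Sh : 'M[R]_d).
Variables (kappa sigma rho : R).
Hypotheses (d_gt0 : (0 < d)%N) (kappa_gt0 : 0 < kappa).
Hypotheses (sigma_gt0 : 0 < sigma) (rho_ge0 : 0 <= rho).
Hypotheses (Sigma_ge : psd (Sigma - kappa^-1%:M)) (Sigma_le : psd (1%:M - Sigma)).
Hypothesis Sh_sqrt : is_sqrtm Sh Sigma.
Hypothesis K_posdef : posdef (1%:M - (rho / d%:R) *: (Z^T *m Z)).

Local Notation X := (Z *m Sh).
Local Notation c := (d%:R * sigma ^+ 2).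
Local Notation N := (Z *m Z^T).
Local Notation W := (d%:R^-1 *: N).
Local Notation L := (1%:M - rho *: W).
Local Notation Minv := (invmx L).
Local Notation K := (1%:M - (rho / d%:R) *: (Z^T *m Z)).
Local Notation H := (X *m X^T + c%:M).

Let dn0 : d%:R != 0 :> R. Proof. by rewrite pnatr_eq0 -lt0n. Qed.
Let c_gt0 : 0 < c. Proof. by rewrite mulr_gt0 ?ltr0n ?exprn_gt0. Qed.

Let Sh_sym : Sh^T = Sh. Proof. by case: Sh_sqrt => -[]. Qed.

Let Sh_unit : Sh \in unitmx.
Proof.
have kinv_gt0 : 0 < kappa^-1 by rewrite invr_gt0.
have := psd_addc_unit Sigma_ge kinv_gt0.
by rewrite subrK -(proj2 Sh_sqrt) unitmx_mul => /andP[].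
Qed.

Let Xt_eq : X^T = Sh *m Z^T. Proof. by rewrite trmx_mul Sh_sym. Qed.

Lemma mul_X_trX : X *m X^T = Z *m Sigma *m Z^T.
Proof. by rewrite Xt_eq -(proj2 Sh_sqrt) !mulmxA. Qed.

Let psd_H : psd H := psdD (psd_mul_tr X) (psd_scalar_mx n (ltW c_gt0)).
Let H_unit : H \in unitmx := psd_addc_unit (psd_mul_tr X) c_gt0.
Let H_sym : H^T = H. Proof. by case: psd_H. Qed.

Lemma ridge_push_through : invmx (X^T *m X + c%:M) *m X^T = X^T *m invmx H.
Proof.
apply: invmx_intertwine => //.
  by apply: psd_addc_unit c_gt0; have := psd_mul_tr X^T; rewrite trmxK.
by rewrite mulmxDr mulmxDl !mulmxA mul_mx_scalar mul_scalar_mx.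
Qed.

Let K_unit : K \in unitmx := posdef_unit K_posdef.

Let LZ : L *m Z = Z *m K.
Proof.
rewrite mulmxBl mul1mx mulmxBr mulmx1; congr (_ - _).
by rewrite -!scalemxAl -scalemxAr scalerA !mulmxA.
Qed.

Let L_unit : L \in unitmx.
Proof.
rewrite -row_free_unit; apply: inj_row_free => v vL0.
have vZ0 : v *m Z = 0.
  have : v *m L *m Z = 0 by rewrite vL0 mul0mx.
  by rewrite -mulmxA LZ mulmxA => vZK0; rewrite -[v *m Z](mulmxK K_unit) vZK0 mul0mx.
have : v *m L = v by rewrite mulmxBr mulmx1 -!scalemxAr mulmxA vZ0 mul0mx !scaler0 subr0.
by rewrite vL0 => <-.
Qed.

Let L_sym : L^T = L.
Proof. by rewrite linearB /= !linearZ /= trmx_mul trmxK trmx1. Qed.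

Let Minv_sym : Minv^T = Minv. Proof. by rewrite trmx_inv L_sym. Qed.

Lemma trZ_Minv : Z^T *m Minv = invmx K *m Z^T.
Proof.
symmetry; apply: invmx_intertwine => //.
rewrite mulmxBr mulmxBl mulmx1 mul1mx; congr (_ - _).
by rewrite -!scalemxAr -scalemxAl scalerA !mulmxA.
Qed.

Lemma Minv_mulN : Minv *m N = N *m Minv.
Proof.
apply: invmx_intertwine => //.
by rewrite mulmxBl mulmxBr mul1mx mulmx1 -!scalemxAl -!scalemxAr.
Qed.

Lemma Minv_subr1 : Minv - 1%:M = (rho / d%:R) *: (N *m Minv).
Proof.
have := mulmxV L_unit; rewrite mulmxBl mul1mx => eL.
by rewrite -[X in _ - X = _]eL opprB addrC subrK -!scalemxAl scalerA.
Qed.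

Lemma psd_Minv_subr1 : psd (Minv - 1%:M).
Proof.
rewrite Minv_subr1 -mulmxA trZ_Minv mulmxA; apply: psdZ.
  by rewrite divr_ge0 ?ler0n.
by apply/psd_congr/psd_invmx => //; apply: posdef_psd.
Qed.

Lemma psd_Minv2_subr1 : psd (Minv *m Minv - 1%:M).
Proof.
have [sM1 _] := psd_Minv_subr1.
have -> : Minv *m Minv - 1%:M =
    (Minv - 1%:M) *m 1%:M *m (Minv - 1%:M)^T + (Minv - 1%:M) + (Minv - 1%:M).
  by rewrite mulmx1 sM1 mulmxBr mulmx1 mulmxBl mul1mx subrK addrA subrK.
apply: psdD; last exact: psd_Minv_subr1.
apply: psdD; last exact: psd_Minv_subr1.
exact/psd_congr/psd_scalar_mx.
Qed.

Lemma Aopt0E : Aopt Z Sigma Sh sigma 0 = X^T *m invmx H.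
Proof. by rewrite /Aopt mul0r scale0r subr0 mul1mx ridge_push_through. Qed.

Lemma AoptE : Aopt Z Sigma Sh sigma rho =
  X^T *m invmx H - (rho * sigma ^+ 2) *: (invmx Sh *m Z^T *m Minv *m invmx H).
Proof.
have eSK : Sigma - (rho / d%:R) *: (X^T *m X) = Sh *m K *m Sh.
  rewrite mulmxBr mulmx1 mulmxBl -(proj2 Sh_sqrt); congr (_ - _).
  by rewrite -scalemxAr -scalemxAl Xt_eq !mulmxA.
rewrite /Aopt eSK invmxM ?unitmx_mul ?Sh_unit ?K_unit // invmxM //.
rewrite -mulmxA ridge_push_through mulmxBl mul1mx -scalemxAl; congr (_ - _ *: _).
rewrite Xt_eq !mulmxA mulmxKV // -(mulmxA (invmx Sh) (invmx K)) -trZ_Minv.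
by rewrite !mulmxA.
Qed.

Lemma Aopt_sub0 : Sh *m (Aopt Z Sigma Sh sigma rho - Aopt Z Sigma Sh sigma 0) =
  (- (rho * sigma ^+ 2) *: (Z^T *m Minv)) *m invmx H.
Proof.
rewrite AoptE Aopt0E addrAC subrr add0r mulmxN -scalemxAr !mulmxA mulmxV // mul1mx.
by rewrite -scalemxAl scaleNr.
Qed.

Let mul_X_trX_invH : X *m X^T *m invmx H = 1%:M - c *: invmx H.
Proof.
rewrite -[M in M *m invmx _](addrK c%:M (X *m X^T)) mulmxBl mulmxV //.
by rewrite mul_scalar_mx.
Qed.

Lemma Aopt0_residualE : X *m Aopt Z Sigma Sh sigma 0 - 1%:M = (- c *: 1%:M) *m invmx H.
Proof.
rewrite Aopt0E mulmxA mul_X_trX_invH.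
by rewrite addrAC subrr add0r -scaleNr -scalemxAl mul1mx.
Qed.

Lemma Aopt_residualE : X *m Aopt Z Sigma Sh sigma rho - 1%:M = (- c *: Minv) *m invmx H.
Proof.
have eNM : (rho * sigma ^+ 2) *: (N *m Minv) = c *: (Minv - 1%:M).
  by rewrite [in RHS]Minv_subr1 (scalerA c); congr (_ *: _); field.
rewrite AoptE mulmxBr mulmxA mul_X_trX_invH.
rewrite -scalemxAr !mulmxA mulmxK // (scalemxAl _ (N *m Minv)) eNM.
rewrite scalerBr mulmxBl -!scalemxAl mul1mx scaleNr.
by rewrite opprB addrA subrK addrAC subrr add0r.
Qed.

Lemma Pcal_gapE :
  Pcal Z Sh sigma (Aopt Z Sigma Sh sigma rho) - Pcal Z Sh sigma (Aopt Z Sigma Sh sigma 0) =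
  rho ^+ 2 * sigma ^+ 4 / d%:R * \tr (Minv *m N *m Minv *m invmx H).
Proof.
have hA0 : Aopt Z Sigma Sh sigma 0 *m H = X^T by rewrite Aopt0E mulmxKV.
rewrite (Pcal_sub_normal d_gt0 _ hA0) Aopt_sub0 mxtrace_scaled_invmx_quad //.
by rewrite trmx_mul Minv_sym trmxK !mulmxA; field.
Qed.

Lemma Pcal_gap_ge :
  rho ^+ 2 * sigma ^+ 4 / d%:R * \tr (Minv *m Minv *m W *m invmx (W + (sigma ^+ 2)%:M))
  <= Pcal Z Sh sigma (Aopt Z Sigma Sh sigma rho) - Pcal Z Sh sigma (Aopt Z Sigma Sh sigma 0).
Proof.
pose H1 := N + c%:M.
have uH1 : H1 \in unitmx := psd_addc_unit (psd_mul_tr Z) c_gt0.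
have trW : \tr (Minv *m Minv *m W *m invmx (W + (sigma ^+ 2)%:M)) =
    \tr (Minv *m N *m Minv *m invmx H1).
  have -> : W + (sigma ^+ 2)%:M = d%:R^-1 *: H1 by rewrite /H1 scalerDr scale_scalar_mx mulKf.
  rewrite invmxZ ?unitmxZ ?unitfE ?invr_eq0 // invrK -!scalemxAr -!scalemxAl scalerA.
  by rewrite (mulfV dn0) scale1r -(mulmxA Minv Minv) [in LHS]Minv_mulN !mulmxA.
rewrite Pcal_gapE trW ler_wpM2l ?mulr_ge0 ?invr_ge0 ?exprn_ge0 ?ler0n ?(ltW sigma_gt0) //.
rewrite -subr_ge0 -linearB /= -mulmxBr; apply: mxtrace_psd_ge0.
  by have := psd_mul_tr (Minv *m Z); rewrite trmx_mul Minv_sym !mulmxA -(mulmxA Minv Z).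
apply: psd_invmx_antitone => //.
rewrite /H1 opprD addrACA subrr addr0 mul_X_trX.
have -> : N - Z *m Sigma *m Z^T = Z *m (1%:M - Sigma) *m Z^T by rewrite mulmxBr mulmx1 mulmxBl.
exact: psd_congr.
Qed.

Lemma Tcal_gapE :
  Tcal Z Sh sigma (Aopt Z Sigma Sh sigma rho) - Tcal Z Sh sigma (Aopt Z Sigma Sh sigma 0) =
  d%:R * sigma ^+ 4 / n%:R * \tr ((Minv *m Minv - 1%:M) *m invmx H).
Proof.
rewrite !(Tcal_trE _ _ _ d_gt0) Aopt_residualE Aopt0_residualE !mxtrace_scaled_invmx_quad //.
rewrite Minv_sym trmx1 !mul1mx mulmxBl mul1mx linearB /= invfM.
by set u := n%:R^-1; field.
Qed.

Lemma Tcal_gap_le :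
  Tcal Z Sh sigma (Aopt Z Sigma Sh sigma rho) - Tcal Z Sh sigma (Aopt Z Sigma Sh sigma 0)
  <= kappa * sigma ^+ 4 / n%:R
     * \tr ((Minv *m Minv - 1%:M) *m invmx (W + (kappa * sigma ^+ 2)%:M)).
Proof.
pose H2 := kappa^-1 *: N + c%:M.
have kn0 : kappa != 0 by rewrite gt_eqF.
have psd_kN : psd (kappa^-1 *: N) by apply: psdZ (psd_mul_tr Z); rewrite invr_ge0 ltW.
have uH2 : H2 \in unitmx := psd_addc_unit psd_kN c_gt0.
have -> : W + (kappa * sigma ^+ 2)%:M = (kappa / d%:R) *: H2.
  rewrite /H2 scalerDr scalerA scale_scalar_mx.
  by congr (_ *: _ + _%:M); field; rewrite ?kn0 ?dn0.
rewrite invmxZ ?unitmxZ ?unitfE ?mulf_neq0 ?invr_eq0 // -scalemxAr mxtraceZ Tcal_gapE.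
set t := \tr ((Minv *m Minv - 1%:M) *m invmx H2).
have -> : kappa * sigma ^+ 4 / n%:R * ((kappa / d%:R)^-1 * t) = d%:R * sigma ^+ 4 / n%:R * t.
  by set u := n%:R^-1; field; rewrite ?kn0 ?dn0.
rewrite ler_wpM2l ?mulr_ge0 ?invr_ge0 ?exprn_ge0 ?ler0n ?(ltW sigma_gt0) //.
rewrite -subr_ge0 -linearB /= -mulmxBr; apply: mxtrace_psd_ge0 psd_Minv2_subr1 _.
apply: psd_invmx_antitone => //; first exact: psdD psd_kN (psd_scalar_mx _ (ltW c_gt0)).
rewrite /H2 opprD addrACA subrr addr0 mul_X_trX.
have -> : Z *m Sigma *m Z^T - kappa^-1 *: N = Z *m (Sigma - kappa^-1%:M) *m Z^T.
  by rewrite mulmxBr mulmxBl mul_mx_scalar -scalemxAl.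
exact: psd_congr.
Qed.

End RidgeModel.

Unset Implicit Arguments.

Theorem lemma7 (R : realType) (n d : nat) (Z : 'M[R]_(n, d))
    (Sigma Sh : 'M[R]_d) (kappa sigma rho : R) :
  (n <= d)%N ->
  Z *m Z^T \in unitmx ->
  Sigma^T = Sigma ->
  1 <= kappa ->
  (forall a : R, eigenvalue Sigma a -> kappa^-1 <= a <= 1) ->
  is_sqrtm Sh Sigma ->
  0 < sigma ->
  0 <= rho ->
  posdef (1%:M - (rho / d%:R) *: (Z^T *m Z)) ->
  let W := (d%:R)^-1 *: (Z *m Z^T) in
  let Minv := invmx (1%:M - rho *: W) in
  Pcal Z Sh sigma (Aopt Z Sigma Sh sigma rho) - Pcal Z Sh sigma (Aopt Z Sigma Sh sigma 0)
    >= rho ^+ 2 * sigma ^+ 4 / d%:R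
       * \tr (Minv *m Minv *m W *m invmx (W + (sigma ^+ 2)%:M))
  /\
  Tcal Z Sh sigma (Aopt Z Sigma Sh sigma rho) - Tcal Z Sh sigma (Aopt Z Sigma Sh sigma 0)
    <= kappa * sigma ^+ 4 / n%:R
       * \tr ((Minv *m Minv - 1%:M) *m invmx (W + (kappa * sigma ^+ 2)%:M)).
Proof.
move=> le_nd _ Sigma_sym kappa_ge1 Sigma_eig Sh_sqrt sigma_gt0 rho_ge0 K_posdef W Minv.
have [d0 | d_gt0] := posnP d.
  have n0 : n = 0%N by apply/eqP; rewrite -leqn0 -d0.
  subst n d; have mxtrace_dim0 (M : 'M[R]_0) : \tr M = 0 by rewrite /mxtrace big_ord0.
  by rewrite !Pcal_dim0 !Tcal_dim0 !mxtrace_dim0 !mulr0 subrr.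
have kappa_gt0 : 0 < kappa := lt_le_trans ltr01 kappa_ge1.
have [Sigma_ge Sigma_le] := eigenvalue_bounds_psd Sigma_sym Sigma_eig.
split.
  exact: Pcal_gap_ge d_gt0 kappa_gt0 sigma_gt0 rho_ge0 Sigma_ge Sigma_le Sh_sqrt K_posdef.
exact: Tcal_gap_le d_gt0 kappa_gt0 sigma_gt0 rho_ge0 Sigma_ge Sh_sqrt K_posdef.
Qed.
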